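(* Fix any total budget $\mathrm{TB}\in\mathbb N_0$. For any number game $G$, the unique inverse of $G$ (up to equality of games) is $\bar G$; that is, $G+\bar G=0$, and if $G'$ is any game form with $G+G'=0$ then $G'=\bar G$.
   Context: Game forms are defined recursively: $G=\{G^{\mathcal L}\mid G^{\mathcal R}\}$ with finite sets of Left and Right options, and finite birthday. $0=\{\varnothing\mid\varnothing\}$. The conjugate is $\bar G=\{\overline{G^{\mathcal R}}\mid\overline{G^{\mathcal L}}\}$. The budget set for total budget $\mathrm{TB}$ is $\mathcal B=\{0,\dots,\mathrm{TB},\hat 0,\dots,\widehat{\mathrm{TB}}\}$: state $p$ (resp. $\hat p$) means Left holds $p$ dollars and Right holds $\mathrm{TB}-p$, and Right (resp. Left) holds the tie-breaking marker. Play of $(G,\tilde p)$: at every position (terminal ones included) both players bid simultaneously, Left $\ell\in\{0,\dots,p\}$, Right $r\in\{0,\dots,\mathrm{TB}-p\}$. If Left holds the marker (state $\hat p$): if $\ell>r$ Left moves to $(G^L,\widehat{p-\ell})$, or, including the marker (allowed when $\ell\ge r$), to $(G^L,p-\ell)$; if $\ell=r$ Left wins, the marker passes to Right, play continues at $(G^L,p-\ell)$; if $\ell<r$ Right moves to $(G^R,\widehat{p+r})$. Symmetrically when Right holds the marker (state $p$): if $r>\ell$ Right moves to $(G^R,p+r)$ or, including the marker, to $(G^R,\widehat{p+r})$; if $r=\ell$ Right wins, the marker passes to Left, play continues at $(G^R,\widehat{p+r})$; if $r<\ell$ Left moves to $(G^L,p-\ell)$. A player who wins a bid but has no option loses. $o(G,\tilde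 p)\in\{\mathrm L,\mathrm R\}$ is the winner under optimal play; $\mathrm L>\mathrm R$. Disjunctive sum $G+H=\{G^{\mathcal L}+H,G+H^{\mathcal L}\mid G^{\mathcal R}+H,G+H^{\mathcal R}\}$. $G\ge H$ means $o(G+X,\tilde p)\ge o(H+X,\tilde p)$ for all game forms $X$ and all $\tilde p\in\mathcal B$; $G=H$ means $G\ge H$ and $H\ge G$; $G>H$ means $G\ge H$ and not $H\ge G$. A game form $G$ is a number if all its options are numbers and $G^L<G<G^R$ for all $G^L\in G^{\mathcal L}$, $G^R\in G^{\mathcal R}$. An inverse of $G$ is a game form $G'$ with $G+G'=0$. *)

From Stdlib Require List.
From mathcomp Require Import all_boot.
Set Implicit Arguments. Unset Strict Implicit. Unset Printing Implicit Defensive.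

(* Game forms: finite lists of Left options and Right options
   (finite birthday is automatic for an inductive type). *)
Inductive game : Type := Node : seq game -> seq game -> game.

Definition lefts (G : game) : seq game := let: Node GL _ := G in GL.
Definition rights (G : game) : seq game := let: Node _ GR := G in GR.

Definition zero : game := Node [::] [::].

Fixpoint conj (G : game) : game :=
  let: Node GL GR := G in Node (map conj GR) (map conj GL).

Fixpoint add (G H : game) {struct G} : game :=
  let fix addH (H : game) : game :=
    let: Node HL HR := H in
    Node (map (fun g => add g H) (lefts G) ++ map addH HL)
         (map (fun g => add g H) (rights G) ++ map addH HR)
  in addH H.

(* win TB G p b = true iff Left wins (G, state) under optimal play, where the
   state is: Left holds p dollars, Right holds TB - p, and the tie-breaking
   marker is held by Left iff b = true (b = true is the state \hat p).
   "Left wins" means Left has a bid l in {0..p} such that for every Right bid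
   r in {0..TB-p} the resulting continuation is won by Left. *)
Fixpoint win (TB : nat) (G : game) (p : nat) (b : bool) {struct G} : bool :=
  let: Node GL GR := G in
  [exists l : 'I_p.+1, [forall r : 'I_(TB - p).+1,
    if b then
      if r < l then
        (* Left wins the bid; may keep the marker or hand it over *)
        has (fun g => win TB g (p - l) true || win TB g (p - l) false) GL
      else if l == r :> nat then
        has (fun g => win TB g (p - l) false) GL
      else
        all (fun g => win TB g (p + r) true) GR
    else
      if l < r then
        (* Right wins; may keep the marker or hand it over *)
        all (fun g => win TB g (p + r) false && win TB g (p + r) true) GR
      else if l == r :> nat then
        all (fun g => win TB g (p + r) true) GR
      else
        has (fun g => win TB g (p - l) false) GL ]].

Definition game_ge (TB : nat) (G H : game) : Prop :=
  forall (X : game) (p : nat) (b : bool), p <= TB ->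
    win TB (add H X) p b -> win TB (add G X) p b.

Definition game_eq (TB : nat) (G H : game) : Prop :=
  game_ge TB G H /\ game_ge TB H G.

Definition game_gt (TB : nat) (G H : game) : Prop :=
  game_ge TB G H /\ ~ game_ge TB H G.

Inductive is_number (TB : nat) : game -> Prop :=
  | is_number_intro (GL GR : seq game) :
      (forall g, List.In g GL -> is_number TB g) ->
      (forall g, List.In g GR -> is_number TB g) ->
      (forall g, List.In g GL -> game_gt TB (Node GL GR) g) ->
      (forall g, List.In g GR -> game_gt TB g (Node GL GR)) ->
      is_number TB (Node GL GR).

(* For a number G, Left wins X + (G + conj G) whenever she wins X.  She bids as
   she would in X.  When Right wins a bid by moving to G^R + conj G or to
   G + conj G^L, Left bids back what Right paid: winning that bid she plays the
   mirror move G^R + conj G^R (resp. G^L + conj G^L), which is >= 0 by induction;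
   losing it she is not hurt, because G^L < G < G^R makes Right's further moves
   there no better for him.  Conversely G + conj G <= 0 by conjugation: Left wins
   conj H with budget TB - p exactly when Right wins H with budget p, a minimax
   statement resting on the marker being worth at most one dollar.  Uniqueness of
   the inverse is then the usual group argument, addition being commutative up to
   reordering options. *)

From mathcomp Require Import all_boot zify.
Set Implicit Arguments. Unset Strict Implicit. Unset Printing Implicit Defensive.

Lemma In_map A B (f : A -> B) s y :
  List.In y (map f s) <-> exists2 x, List.In x s & y = f x.
Proof.
elim: s => [|x s IH] /=; first by split=> [[] | [x []]].
split=> [[<- | /IH[z zs ->]] | [z [<- | zs] yz]];
  [by exists x; [left|] | by exists z; [right|] | by left | by right; apply/IH; exists z].
Qed.

Lemma In_map_f A B (f : A -> B) s x : List.In x s -> List.In (f x) (map f s).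
Proof. by move=> xs; apply/In_map; exists x. Qed.

Lemma In_cat A (s t : seq A) x : List.In x (s ++ t) <-> List.In x s \/ List.In x t.
Proof. by elim: s => [|y s IH] /=; [tauto | rewrite IH; tauto]. Qed.

Lemma hasPIn T (a : pred T) s : reflect (exists2 x, List.In x s & a x) (has a s).
Proof.
elim: s => [|y s IH] /=; first by right; case.
apply: (iffP orP) => [[ay | /IH[x sx ax]] | [x [<- | sx] ax]];
  [by exists y; [left|] | by exists x; [right|] | by left | by right; apply/IH; exists x].
Qed.

Lemma allPIn T (a : pred T) s : reflect (forall x, List.In x s -> a x) (all a s).
Proof.
elim: s => [|y s IH] /=; first by left.
apply: (iffP andP) => [[ay /IH all_s] x [<- | /all_s] // | all_ys].
by split; [apply: all_ys; left | apply/IH => x sx; apply: all_ys; right].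
Qed.

Lemma sub_hasIn T (a a' : pred T) s :
  (forall x, List.In x s -> a x -> a' x) -> has a s -> has a' s.
Proof. by move=> aa' /hasPIn[x sx ax]; apply/hasPIn; exists x => //; apply: aa'. Qed.

Lemma sub_allIn T (a a' : pred T) s :
  (forall x, List.In x s -> a x -> a' x) -> all a s -> all a' s.
Proof. by move=> aa' /allPIn all_a; apply/allPIn => x sx; apply/aa'/all_a. Qed.

Lemma eq_hasIn T (a a' : pred T) s : (forall x, List.In x s -> a x = a' x) -> has a s = has a' s.
Proof. by move=> eqa; apply/idP/idP; apply: sub_hasIn => x /eqa ->. Qed.

Lemma eq_allIn T (a a' : pred T) s : (forall x, List.In x s -> a x = a' x) -> all a s = all a' s.
Proof. by move=> eqa; apply/idP/idP; apply: sub_allIn => x /eqa ->. Qed.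

Lemma eq_mapIn A B (f g : A -> B) s : (forall x, List.In x s -> f x = g x) -> map f s = map g s.
Proof.
by elim: s => //= x s IH eqfg; rewrite eqfg; [rewrite IH // => y ys; apply: eqfg; right | left].
Qed.

Fixpoint forall_In T (P : T -> Prop) (f : forall x, P x) (s : seq T) :
    forall x, List.In x s -> P x :=
  if s is y :: s' return forall x, List.In x s -> P x then
    fun x xs => match xs with
                | or_introl e => eq_ind y P (f y) x e
                | or_intror xs' => forall_In f xs'
                end
  else fun x xs => False_ind _ xs.

Lemma game_ind_In (P : game -> Prop) :
  (forall GL GR, (forall g, List.In g GL -> P g) -> (forall g, List.In g GR -> P g) ->
     P (Node GL GR)) ->
  forall G, P G.
Proof. by move=> IH; fix F 1 => -[GL GR]; apply: IH => g; apply: (forall_In F). Qed.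

Lemma addE G H :
  add G H = Node (map (add^~ H) (lefts G) ++ map (add G) (lefts H))
                 (map (add^~ H) (rights G) ++ map (add G) (rights H)).
Proof. by case: G; case: H. Qed.

Lemma lefts_add G H : lefts (add G H) = map (add^~ H) (lefts G) ++ map (add G) (lefts H).
Proof. by rewrite addE. Qed.

Lemma rights_add G H : rights (add G H) = map (add^~ H) (rights G) ++ map (add G) (rights H).
Proof. by rewrite addE. Qed.

Lemma lefts_conj G : lefts (conj G) = map conj (rights G). Proof. by case: G. Qed.
Lemma rights_conj G : rights (conj G) = map conj (lefts G). Proof. by case: G. Qed.
Lemma conj0 : conj zero = zero. Proof. by []. Qed.

Lemma add0g X : add zero X = X.
Proof.
elim/game_ind_In: X => XL XR IHL IHR; rewrite addE /=.
by congr Node; rewrite -[RHS]map_id; apply: eq_mapIn.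
Qed.

Lemma addgA A B C : add (add A B) C = add A (add B C).
Proof.
elim/game_ind_In: A B C => AL AR IHAL IHAR B.
elim/game_ind_In: B => BL BR IHBL IHBR C.
elim/game_ind_In: C => CL CR IHCL IHCR.
rewrite [LHS]addE [RHS]addE !lefts_add !rights_add !map_cat -!catA -!map_comp.
by congr (Node (_ ++ _ ++ _) (_ ++ _ ++ _)); apply: eq_mapIn => x xs;
  first [exact (IHAL x xs _ _) | exact (IHBL x xs _) | exact (IHCL x xs)
        | exact (IHAR x xs _ _) | exact (IHBR x xs _) | exact (IHCR x xs)].
Qed.

Lemma game_eta G : G = Node (lefts G) (rights G). Proof. by case: G. Qed.

Lemma conj_add A B : conj (add A B) = add (conj A) (conj B).
Proof.
elim/game_ind_In: A B => AL AR IHAL IHAR B.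
elim/game_ind_In: B => BL BR IHBL IHBR.
rewrite [LHS]game_eta [RHS]addE lefts_conj rights_conj lefts_add rights_add.
rewrite !lefts_conj !rights_conj !map_cat -!map_comp.
by congr (Node (_ ++ _) (_ ++ _)); apply: eq_mapIn => x xs;
  first [exact (IHAR x xs _) | exact (IHBR x xs) | exact (IHAL x xs _) | exact (IHBL x xs)].
Qed.

Lemma conjK G : conj (conj G) = G.
Proof.
elim/game_ind_In: G => GL GR IHL IHR /=; rewrite -!map_comp.
by congr Node; rewrite -[RHS]map_id; apply: eq_mapIn.
Qed.

Definition lift_rel S T (R : S -> T -> Prop) (s : seq S) (t : seq T) :=
  (forall x, List.In x s -> exists2 y, List.In y t & R x y) /\
  (forall y, List.In y t -> exists2 x, List.In x s & R x y).

Lemma lift_rel_cat S T (R : S -> T -> Prop) s1 s2 t1 t2 :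
  lift_rel R s1 t1 -> lift_rel R s2 t2 -> lift_rel R (s1 ++ s2) (t1 ++ t2).
Proof.
move=> [f1 b1] [f2 b2]; split.
- by move=> x /In_cat[/f1|/f2] [y yt xy]; exists y => //; apply/In_cat; [left|right].
- by move=> y /In_cat[/b1|/b2] [x xs xy]; exists x => //; apply/In_cat; [left|right].
Qed.

Lemma lift_rel_catC S T (R : S -> T -> Prop) s1 s2 t1 t2 :
  lift_rel R s1 t2 -> lift_rel R s2 t1 -> lift_rel R (s1 ++ s2) (t1 ++ t2).
Proof.
move=> [f1 b1] [f2 b2]; split.
- by move=> x /In_cat[/f1|/f2] [y yt xy]; exists y => //; apply/In_cat; [right|left].
- by move=> y /In_cat[/b2|/b1] [x xs xy]; exists x => //; apply/In_cat; [right|left].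
Qed.

Lemma lift_rel_sub S T (R R' : S -> T -> Prop) s t :
  (forall x y, List.In x s -> List.In y t -> R x y -> R' x y) -> lift_rel R s t -> lift_rel R' s t.
Proof.
move=> RR' [fw bw]; split.
- by move=> x xs; have [y yt xy] := fw x xs; exists y => //; apply: RR'.
- by move=> y yt; have [x xs xy] := bw y yt; exists x => //; apply: RR'.
Qed.

Lemma lift_rel_map S T S' T' (R : S -> T -> Prop) (R' : S' -> T' -> Prop)
    (f : S -> S') (g : T -> T') s t :
  (forall x y, List.In x s -> List.In y t -> R x y -> R' (f x) (g y)) ->
  lift_rel R s t -> lift_rel R' (map f s) (map g t).
Proof.
move=> RR' [fw bw]; split.
- move=> _ /In_map[x xs ->]; have [y yt xy] := fw x xs.
  by exists (g y); [apply: In_map_f | apply: RR'].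
- move=> _ /In_map[y yt ->]; have [x xs xy] := bw y yt.
  by exists (f x); [apply: In_map_f | apply: RR'].
Qed.

Lemma lift_rel_map_diag S T T' (R : T -> T' -> Prop) (f : S -> T) (g : S -> T') s :
  (forall x, List.In x s -> R (f x) (g x)) -> lift_rel R (map f s) (map g s).
Proof.
move=> fg; split=> _ /In_map[x xs ->].
- by exists (g x); [apply: In_map_f | apply: fg].
- by exists (f x); [apply: In_map_f | apply: fg].
Qed.

(* Equality of game forms up to the order and multiplicity of options; [add] is
   commutative only up to [iso]. *)
Inductive iso : game -> game -> Prop :=
  IsoNode GL GR HL HR :
    lift_rel iso GL HL -> lift_rel iso GR HR -> iso (Node GL GR) (Node HL HR).

Lemma isoE GL GR HL HR :
  iso (Node GL GR) (Node HL HR) <-> lift_rel iso GL HL /\ lift_rel iso GR HR.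
Proof. by split=> [isoGH | [isoL isoR]]; [inversion isoGH | constructor]. Qed.

Lemma iso_addl X G H : iso G H -> iso (add G X) (add H X).
Proof.
elim/game_ind_In: X G H => XL XR IHXL IHXR G.
elim/game_ind_In: G => GL GR IHGL IHGR [HL HR] isoGH; have /isoE[isoL isoR] := isoGH.
rewrite [add (Node GL GR) _]addE [add (Node HL HR) _]addE.
by apply/isoE; split; apply: lift_rel_cat;
  [ apply: lift_rel_map isoL => g h gL _; apply: IHGL
  | apply: lift_rel_map_diag => x xX; apply: IHXL
  | apply: lift_rel_map isoR => g h gR _; apply: IHGR
  | apply: lift_rel_map_diag => x xX; apply: IHXR ].
Qed.

Lemma iso_addC A B : iso (add A B) (add B A).
Proof.
elim/game_ind_In: A B => AL AR IHAL IHAR B.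
elim/game_ind_In: B => BL BR IHBL IHBR.
rewrite addE [add (Node BL BR) _]addE.
by apply/isoE; split; apply: lift_rel_catC; apply: lift_rel_map_diag => x xs;
  first [exact (IHAL x xs _) | exact (IHBL x xs) | exact (IHAR x xs _) | exact (IHBR x xs)].
Qed.

Definition round_win (w : game -> nat -> bool -> bool) (GL GR : seq game)
    (p : nat) (b : bool) (l r : nat) : bool :=
  if b then
    if r < l then has (fun g => w g (p - l) true || w g (p - l) false) GL
    else if l == r then has (fun g => w g (p - l) false) GL
    else all (fun g => w g (p + r) true) GR
  else
    if l < r then all (fun g => w g (p + r) false && w g (p + r) true) GR
    else if l == r then all (fun g => w g (p + r) true) GR
    else has (fun g => w g (p - l) false) GL.

Lemma round_win_sub (w w' : game -> nat -> bool -> bool) GL GR HL HR p p' b l r :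
  (forall g, List.In g GL ->
     exists2 h, List.In h HL & forall c, w g (p - l) c -> w' h (p' - l) c) ->
  (forall h, List.In h HR ->
     exists2 g, List.In g GR & forall c, w g (p + r) c -> w' h (p' + r) c) ->
  round_win w GL GR p b l r -> round_win w' HL HR p' b l r.
Proof.
move=> subL subR.
have hasL (a a' : pred game) :
    (forall g h, (forall c, w g (p - l) c -> w' h (p' - l) c) -> a g -> a' h) ->
    has a GL -> has a' HL.
  move=> aa' /hasPIn[g /subL[h hH gh] ag]; apply/hasPIn; exists h => //; exact: aa' ag.
have allR (a a' : pred game) :
    (forall g h, (forall c, w g (p + r) c -> w' h (p' + r) c) -> a g -> a' h) ->
    all a GR -> all a' HR.
  move=> aa' /allPIn all_a; apply/allPIn => h /subR[g gG gh]; exact/(aa' _ _ gh)/all_a.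
rewrite /round_win; case: b; do 2?case: ifP => _;
  first [apply: hasL | apply: allR] => g h gh;
  first [exact: gh | by move=> /orP[/gh-> | /gh->]; rewrite ?orbT | by move=> /andP[/gh-> /gh->]].
Qed.

(* The minimax lemmas turn "every [l] is refuted
   by some [r]" into "one [r] refutes every [l]": the common refutation is the
   largest bid with which the [r]-bidder can still afford to win the round. *)
Definition tie_to_l (fa fr hr : nat -> bool) (l r : nat) : bool :=
  if r < l then fa l else if l == r then fr l else hr r.

Definition tie_to_r (hb hr fr : nat -> bool) (l r : nat) : bool :=
  if l < r then hb r else if l == r then hr r else fr l.

Lemma minimax_tie_to_l p q (fa fr hr : nat -> bool) :
  (forall l, l <= p -> fr l -> fa l) ->
  (forall l, l < p -> fa l.+1 -> fr l) ->
  (forall l l', l <= l' <= p -> fa l' -> fa l) ->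
  (forall r r', r <= r' <= q -> hr r -> hr r') ->
  (forall l, l <= p -> exists2 r, r <= q & ~~ tie_to_l fa fr hr l r) ->
  exists2 r, r <= q & forall l, l <= p -> ~~ tie_to_l fa fr hr l r.
Proof.
move=> fr_fa faS_fr fa_anti hr_mono counter.
pose good r := (r <= q) && ((r == 0) || ~~ hr r).
have good_q r : good r -> r <= q by case/andP.
have [rho /andP[rho_q rho_good] rho_max] := ex_maxnP (ex_intro good 0 isT) good_q.
have not_fr : rho <= p -> ~~ fr rho.
  move=> rho_p; have [r r_q] := counter rho rho_p; rewrite /tie_to_l.
  case: (ltngtP r rho) => [_ | lt_rho_r | _ //]; first by apply: contra; apply: fr_fa.
  move=> not_hr; suff : rho.+1 <= rho by rewrite ltnn.
  apply: rho_max; rewrite /good (leq_trans lt_rho_r r_q) /=.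
  by apply: contra not_hr; apply: hr_mono; rewrite lt_rho_r.
exists rho => // l l_p; rewrite /tie_to_l.
case: (ltngtP rho l) => [lt_rho_l | lt_l_rho | eq_rho_l]; last by move: l_p; rewrite -eq_rho_l.
- apply: contra (not_fr (leq_trans (ltnW lt_rho_l) l_p)) => fa_l.
  by apply: faS_fr; [lia | apply: fa_anti fa_l; rewrite lt_rho_l].
- by rewrite (gtn_eqF (leq_ltn_trans (leq0n l) lt_l_rho)) in rho_good.
Qed.

Lemma minimax_tie_to_r p q (hb hr fr : nat -> bool) :
  (forall r, r <= q -> hb r -> hr r) ->
  (forall r, r < q -> hr r -> hb r.+1) ->
  (forall r r', r <= r' <= q -> hb r -> hb r') ->
  (forall r r', r <= r' <= q -> hr r -> hr r') ->
  (forall l l', l <= l' <= p -> fr l' -> fr l) ->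
  (forall l, l <= p -> exists2 r, r <= q & ~~ tie_to_r hb hr fr l r) ->
  exists2 r, r <= q & forall l, l <= p -> ~~ tie_to_r hb hr fr l r.
Proof.
move=> hb_hr hr_hbS hb_mono hr_mono fr_anti counter.
pose good r := [&& r <= q, (r == 0) || ~~ hb r & ~~ hr r].
have not_hr_hbS r : r < q -> ~~ hb r.+1 -> ~~ hr r by move=> lt_rq; apply/contra/hr_hbS.
have good0 : good 0.
  rewrite /good /=; have [r r_q] := counter 0 (leq0n p); rewrite /tie_to_r.
  case: (posnP r) => [-> // | r_gt0 not_hb].
  apply: contra not_hb => hr0; apply: hb_mono (hr_hbS 0 _ hr0); lia.
have good_q r : good r -> r <= q by case/andP.
have [rho /and3P[rho_q rho_hb rho_hr] rho_max] := ex_maxnP (ex_intro good 0 good0) good_q.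
have rhoS_not_good : ~~ good rho.+1 by apply/negP => /rho_max; rewrite ltnn.
exists rho => // l l_p; rewrite /tie_to_r.
case: (ltngtP l rho) => [lt_l_rho | lt_rho_l | _ //].
  by rewrite (gtn_eqF (leq_ltn_trans (leq0n l) lt_l_rho)) in rho_hb.
apply: contra (fr_anti rho.+1 l _) _; first by rewrite lt_rho_l.
have [r r_q] := counter rho.+1 ltac:(lia); rewrite /tie_to_r.
case: (ltngtP rho.+1 r) => [lt_rhoS_r | // | eq_r] not_w; apply: contra rhoS_not_good => _.
- rewrite /good (leq_trans (ltnW lt_rhoS_r) r_q) /=.
  have not_hbS : ~~ hb rho.+1 by apply: contra not_w; apply: hb_mono; lia.
  rewrite not_hbS /=; apply: not_hr_hbS; first lia.
  by apply: contra not_w; apply: hb_mono; lia.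
- rewrite -eq_r in r_q not_w.
  by rewrite /good r_q not_w (contra (hb_hr _ r_q) not_w) orbT.
Qed.

Section Bidding.
Variable TB : nat.

Lemma winE GL GR p b : win TB (Node GL GR) p b =
  [exists l : 'I_p.+1, [forall r : 'I_(TB - p).+1, round_win (win TB) GL GR p b l r]].
Proof. by []. Qed.

Lemma winP GL GR p b :
  reflect (exists2 l, l <= p & forall r, r <= TB - p -> round_win (win TB) GL GR p b l r)
          (win TB (Node GL GR) p b).
Proof.
rewrite winE; apply: (iffP existsP) => [[l /forallP wl] | [l l_p wl]].
  by exists l => [|r r_q]; [rewrite -ltnS | exact: (wl (Ordinal (r_q : r < _.+1)))].
by exists (Ordinal (l_p : l < p.+1)); apply/forallP => r; apply: wl; rewrite -ltnS.
Qed.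

Lemma winPn GL GR p b :
  reflect (forall l, l <= p -> exists2 r, r <= TB - p & ~~ round_win (win TB) GL GR p b l r)
          (~~ win TB (Node GL GR) p b).
Proof.
rewrite winE negb_exists; apply: (iffP forallP) => [nw l l_p | nw l].
  have /forallPn[r nwr] := nw (Ordinal (l_p : l < p.+1)).
  by exists r; first rewrite -ltnS.
have [r r_q nwr] := nw l ltac:(by rewrite -ltnS).
by apply/forallPn; exists (Ordinal (r_q : r < _.+1)).
Qed.

Lemma iso_win G H : iso G H -> forall p b, win TB G p b = win TB H p b.
Proof.
elim/game_ind_In: G H => GL GR IHL IHR [HL HR] /isoE[isoL isoR] p b.
pose same_win g h := forall k c, win TB g k c = win TB h k c.
have [fwL bwL] := lift_rel_sub (R' := same_win) (fun g h gL _ => IHL g gL h) isoL.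
have [fwR bwR] := lift_rel_sub (R' := same_win) (fun g h gR _ => IHR g gR h) isoR.
apply/idP/idP => /winP[l l_p wl]; apply/winP; exists l => // r r_q;
  apply: round_win_sub (wl r r_q).
- by move=> g /fwL[h hH e]; exists h => // c; rewrite e.
- by move=> h /bwR[g gG e]; exists g => // c; rewrite e.
- by move=> h /bwL[g gG e]; exists g => // c; rewrite e.
- by move=> g /fwR[h hH e]; exists h => // c; rewrite e.
Qed.

Lemma win_budgetS G p b : p < TB -> win TB G p b -> win TB G p.+1 b.
Proof.
elim/game_ind_In: G p b => GL GR IHL IHR p b lt_pTB /winP[l l_p wl].
apply/winP; exists l; first exact: leqW.
move=> r r_q; apply: round_win_sub (wl r _) => [g gL | h hR |]; last by lia.
- by exists g => // c; rewrite subSn //; apply: IHL => //; lia.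
- by exists h => // c; rewrite addSn; apply: IHR => //; lia.
Qed.

Lemma win_budget_mono G p p' b : p <= p' <= TB -> win TB G p b -> win TB G p' b.
Proof.
move=> /andP[le_pp']; elim: p' le_pp' => [|p' IH]; first by rewrite leqn0 => /eqP->.
rewrite leq_eqVlt ltnS => /predU1P[-> // | le_pp'] lt_p'TB w.
by apply: win_budgetS => //; apply: IH => //; apply: ltnW.
Qed.

Lemma win_marker_dollar G p : p < TB -> win TB G p true -> win TB G p.+1 false.
Proof.
elim/game_ind_In: G p => GL GR IHL IHR p lt_pTB /winP[l l_p wl].
have wR r g : l < r <= TB - p -> List.In g GR -> win TB g (p + r) true.
  case/andP=> lt_lr r_q; move: (wl r r_q); rewrite /round_win ltnNge (ltnW lt_lr).
  by rewrite (ltn_eqF lt_lr) => /allPIn; apply.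
apply/winP; exists l; first exact: leqW.
move=> r r_q; rewrite /round_win addSn.
case: (ltngtP l r) => [lt_lr | lt_rl | eq_lr].
- apply/allPIn => g gR; apply/andP; split.
    by apply: IHR => //; [lia | apply: wR => //; lia].
  by rewrite -addnS; apply: wR => //; lia.
- have := wl r ltac:(lia); rewrite /round_win lt_rl.
  by apply: sub_hasIn => g gL /orP[] w; rewrite subSn //;
    [apply: IHL | apply: win_budgetS] => //; lia.
- by apply/allPIn => g gR; rewrite -addnS; apply: wR => //; lia.
Qed.

Lemma round_win_conj GL GR p b l r :
  (forall g, List.In g GL -> forall k c, k <= TB ->
     win TB (conj g) (TB - k) c = ~~ win TB g k (~~ c)) ->
  (forall g, List.In g GR -> forall k c, k <= TB ->
     win TB (conj g) (TB - k) c = ~~ win TB g k (~~ c)) ->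
  p <= TB -> l <= p -> r <= TB - p ->
  round_win (win TB) (map conj GR) (map conj GL) (TB - p) b r l =
  ~~ round_win (win TB) GL GR p (~~ b) l r.
Proof.
move=> IHL IHR le_pTB l_p r_q; rewrite /round_win.
have -> : TB - p - r = TB - (p + r) by lia.
have -> : TB - p + l = TB - (p - l) by lia.
have le_prTB : p + r <= TB by lia.
have le_plTB : p - l <= TB by lia.
case: b => /=; case: ltnP => _; rewrite ?(eq_sym r);
  (try case: eqP => _); rewrite ?has_map ?all_map -?has_predC -?all_predC;
  first [apply: eq_hasIn | apply: eq_allIn] => g gG /=;
  first [rewrite !(IHL g gG) | rewrite !(IHR g gG)] => //=; by rewrite ?negb_and ?negb_or.
Qed.

Lemma win_conj G p b : p <= TB -> win TB (conj G) (TB - p) b = ~~ win TB G p (~~ b).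
Proof.
elim/game_ind_In: G p b => GL GR IHL IHR p b le_pTB /=.
apply/idP/idP => [/winP[r r_q wr] | /winPn counter].
  apply/winPn => l l_p; exists r => //.
  by rewrite -round_win_conj //; apply: wr; lia.
suff [r r_q wr] : exists2 r, r <= TB - p &
    forall l, l <= p -> ~~ round_win (win TB) GL GR p (~~ b) l r.
  apply/winP; exists r => // l; rewrite subKn // => l_p.
  by rewrite round_win_conj //; apply: wr.
case: b counter => /= counter.
- apply: (@minimax_tie_to_r p (TB - p)
    (fun r => all (fun g => win TB g (p + r) false && win TB g (p + r) true) GR)
    (fun r => all (fun g => win TB g (p + r) true) GR)
    (fun l => has (fun g => win TB g (p - l) false) GL)) => //.
  + by move=> r _; apply: sub_allIn => g _ /andP[].
  + move=> r lt_rq; apply: sub_allIn => g _ w; rewrite addnS win_marker_dollar ?win_budgetS //; lia.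
  + move=> r r' /andP[le_rr' le_r'q]; apply: sub_allIn => g _ /andP[w w'].
    by rewrite !(win_budget_mono _ w, win_budget_mono _ w') //; lia.
  + move=> r r' /andP[le_rr' le_r'q]; apply: sub_allIn => g _ w.
    by apply: (win_budget_mono _ w); lia.
  + move=> l l' /andP[le_ll' le_l'p]; apply: sub_hasIn => g _ w.
    by apply: (win_budget_mono _ w); lia.
- apply: (@minimax_tie_to_l p (TB - p)
    (fun l => has (fun g => win TB g (p - l) true || win TB g (p - l) false) GL)
    (fun l => has (fun g => win TB g (p - l) false) GL)
    (fun r => all (fun g => win TB g (p + r) true) GR)) => //.
  + by move=> l _; apply: sub_hasIn => g _ ->; rewrite orbT.
  + move=> l lt_lp; apply: sub_hasIn => g _; have -> : p - l = (p - l.+1).+1 by lia.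
    by case/orP=> w; [apply: win_marker_dollar | apply: win_budgetS] => //; lia.
  + move=> l l' /andP[le_ll' le_l'p]; apply: sub_hasIn => g _.
    by case/orP=> w; apply/orP; [left|right]; apply: (win_budget_mono _ w); lia.
  + move=> r r' /andP[le_rr' le_r'q]; apply: sub_allIn => g _ w.
    by apply: (win_budget_mono _ w); lia.
Qed.

Lemma game_ge_trans A B C : game_ge TB A B -> game_ge TB B C -> game_ge TB A C.
Proof. by move=> geAB geBC X p b le_pTB /(geBC _ _ _ le_pTB); apply: geAB. Qed.

Lemma iso_game_ge A B : iso A B -> game_ge TB A B.
Proof. by move=> isoAB X p b _; rewrite (iso_win (iso_addl X isoAB)). Qed.

Lemma game_ge_add2r C A B : game_ge TB A B -> game_ge TB (add A C) (add B C).
Proof. by move=> geAB X p b; rewrite !addgA; apply: geAB. Qed.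

Lemma game_ge_add2l C A B : game_ge TB A B -> game_ge TB (add C A) (add C B).
Proof.
move=> geAB X p b; rewrite !(iso_win (iso_addl X (iso_addC C _))); exact: game_ge_add2r.
Qed.

Lemma game_ge_conj A B : game_ge TB A B -> game_ge TB (conj B) (conj A).
Proof.
move=> geAB X p b le_pTB.
have conj_sum C : add (conj C) X = conj (add C (conj X)) by rewrite conj_add conjK.
rewrite !conj_sum -[p](subKn le_pTB) !win_conj ?leq_subr //.
by apply: contra; apply: geAB; apply: leq_subr.
Qed.

Lemma add_conj_le0 G : game_ge TB (add G (conj G)) zero -> game_ge TB zero (add G (conj G)).
Proof.
move=> /game_ge_conj; rewrite conj0 conj_add conjK => ge0.
exact (game_ge_trans ge0 (iso_game_ge (iso_addC (conj G) G))).
Qed.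

Lemma game_ge_inverse G H H' :
  game_ge TB zero (add G H) -> game_ge TB (add G H') zero -> game_ge TB H' H.
Proof.
move=> le0 ge0'.
have H'0 : game_ge TB H' (add H' zero).
  by have := iso_addC zero H'; rewrite add0g => /iso_game_ge.
apply: (game_ge_trans H'0); apply: (game_ge_trans (game_ge_add2l (C := H') le0)).
rewrite -addgA; apply: (game_ge_trans (game_ge_add2r (C := H) (iso_game_ge (iso_addC H' G)))).
by rewrite -{2}[H]add0g; apply: game_ge_add2r.
Qed.

Lemma game_ge0_win Q X p b :
  game_ge TB Q zero -> p <= TB -> win TB X p b -> win TB (add Q X) p b.
Proof. by move=> geQ0 le_pTB wX; apply: geQ0; rewrite ?add0g. Qed.

(* A position Left can answer, with [q], when Right moves to it. *)
Definition answerable Q :=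
  [/\ game_ge TB Q zero, exists2 q, List.In q (lefts Q) & game_ge TB q zero
    & forall q, List.In q (rights Q) -> game_ge TB q Q].

Lemma answerable_add_win Q XL XR p l :
  answerable Q -> p <= TB -> win TB (Node XL XR) p false ->
  (forall r, r <= TB - p -> round_win (win TB) XL XR p false l r) ->
  forall t, l <= t <= TB - p -> win TB (add Q (Node XL XR)) (p + t) true.
Proof.
move=> [Q_ge0 [q qQ q_ge0] Q_rights] le_pTB wX wl t.
have [n] := ubnP (TB - p - t); elim: n t => // n IH t lt_n /andP[le_lt le_tq].
have wXR_t x : List.In x XR -> win TB x (p + t) true.
  move=> xX; have := wl t le_tq; rewrite /round_win.
  case: (ltngtP l t) => [_ | lt_tl | _]; last by move=> /allPIn/(_ x xX).
  - by move=> /allPIn/(_ x xX)/andP[].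
  - by exfalso; lia.
have answer : has (fun g => win TB g p false)
    (map (add^~ (Node XL XR)) (lefts Q) ++ map (add Q) XL).
  rewrite has_cat has_map; apply/orP; left.
  by apply/hasPIn; exists q => //; apply: game_ge0_win.
rewrite addE; apply/winP; exists t; first by rewrite leq_addl.
move=> r r_q; rewrite /round_win addnK /=.
case: (ltngtP r t) => [_ | lt_tr | _ //].
  by apply: sub_hasIn answer => g _ ->; rewrite orbT.
rewrite all_cat !all_map; apply/andP; split; apply/allPIn.
- move=> q' q'Q /=; apply: (Q_rights q' q'Q); first lia.
  by rewrite -addnA; apply: IH; lia.
- move=> x xX /=; apply: game_ge0_win Q_ge0 _ _; first lia.
  by apply: win_budget_mono (wXR_t x xX); lia.
Qed.

Lemma answerable_rights_ge0 S :
  (forall Q, List.In Q (rights S) -> answerable Q) -> game_ge TB S zero.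
Proof.
move=> S_ans X; rewrite add0g; elim/game_ind_In: X => XL XR IHL IHR p b le_pTB wX.
have /winP[l l_p wl] := wX.
rewrite addE; apply/winP; exists l => // r r_q; have := wl r r_q; rewrite /round_win /=.
have le_plTB : p - l <= TB by lia.
have le_prTB : p + r <= TB by lia.
have moveL (a a' : pred game) :
    (forall x, List.In x XL -> a x -> a' (add S x)) -> has a XL ->
    has a' (map (add^~ (Node XL XR)) (lefts S) ++ map (add S) XL).
  move=> aa' has_a; rewrite has_cat !has_map; apply/orP; right.
  by apply: (sub_hasIn _ has_a) => x xXL ax; exact (aa' x xXL ax).
have moveR (a a' : pred game) :
    (forall Q, List.In Q (rights S) -> answerable Q -> a' (add Q (Node XL XR))) ->
    (forall x, List.In x XR -> a x -> a' (add S x)) -> all a XR ->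
    all a' (map (add^~ (Node XL XR)) (rights S) ++ map (add S) XR).
  move=> aQ aa' all_a; rewrite all_cat !all_map; apply/andP; split.
    by apply/allPIn => Q SQ; exact (aQ Q SQ (S_ans Q SQ)).
  by apply: (sub_allIn _ all_a) => x xXR ax; exact (aa' x xXR ax).
have wX_r c : win TB (Node XL XR) p c -> win TB (Node XL XR) (p + r) c.
  by apply: win_budget_mono; rewrite leq_addr.
case: b wX wl => wX wl; case: (ltngtP l r) => [lt_lr | lt_rl | eq_lr].
- apply: moveR => [Q _ | x xX]; last exact: IHR.
  by move=> [Q_ge0 _ _]; apply: game_ge0_win Q_ge0 _ (wX_r _ wX).
- apply: moveL => x xX /orP[] w; apply/orP; [left | right]; exact: IHL.
- by apply: moveL => x xX; apply: IHL.
- apply: moveR => [Q _ Q_ans | x xX /andP[w w']]; last by apply/andP; split; apply: IHR.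
  apply/andP; split; last by apply: (answerable_add_win Q_ans le_pTB wX wl); lia.
  by case: Q_ans => Q_ge0 _ _; apply: game_ge0_win Q_ge0 _ (wX_r _ wX).
- by apply: moveL => x xX; apply: IHL.
- apply: moveR => [Q _ Q_ans | x xX]; last exact: IHR.
  by apply: (answerable_add_win Q_ans le_pTB wX wl); lia.
Qed.

Lemma number_ge_lefts G g : is_number TB G -> List.In g (lefts G) -> game_ge TB G g.
Proof. by case=> GL GR _ _ gtL _ /gtL[]. Qed.

Lemma number_le_rights G g : is_number TB G -> List.In g (rights G) -> game_ge TB g G.
Proof. by case=> GL GR _ _ _ gtR /gtR[]. Qed.

Lemma number_add_conj_ge0 G : is_number TB G -> game_ge TB (add G (conj G)) zero.
Proof.
elim=> {G} GL GR numL IHL numR IHR gtL gtR; set G := Node GL GR.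
apply: answerable_rights_ge0 => Q; rewrite rights_add rights_conj.
move=> /In_cat[/In_map[gr grG ->] | /In_map[_ /In_map[gl glG ->] ->]].
- have G_gr : game_ge TB gr G by case: (gtR gr grG).
  split.
  + apply: game_ge_trans (IHR gr grG); apply: game_ge_add2l; exact: game_ge_conj.
  + exists (add gr (conj gr)); last exact: IHR.
    by rewrite lefts_add lefts_conj; apply/In_cat; right; do 2!apply: In_map_f.
  + move=> q; rewrite rights_add rights_conj.
    move=> /In_cat[/In_map[grr grr_gr ->] | /In_map[_ /In_map[gl glG ->] ->]].
    * by apply: game_ge_add2r; apply: number_le_rights (numR gr grG) grr_gr.
    * by apply: game_ge_add2l; apply: game_ge_conj; case: (gtL gl glG).
- have G_gl : game_ge TB G gl by case: (gtL gl glG).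
  split.
  + by apply: game_ge_trans (IHL gl glG); apply: game_ge_add2r.
  + exists (add gl (conj gl)); last exact: IHL.
    by rewrite lefts_add; apply/In_cat; left; apply: In_map_f.
  + move=> q; rewrite rights_add rights_conj.
    move=> /In_cat[/In_map[gr grG ->] | /In_map[_ /In_map[gll gll_gl ->] ->]].
    * by apply: game_ge_add2r; case: (gtR gr grG).
    * apply: game_ge_add2l; apply: game_ge_conj.
      exact: number_ge_lefts (numL gl glG) gll_gl.
Qed.

End Bidding.

Theorem mainTheorem8 (TB : nat) (G : game) :
  is_number TB G ->
  game_eq TB (add G (conj G)) zero /\
  (forall G' : game, game_eq TB (add G G') zero -> game_eq TB G' (conj G)).
Proof.
move=> numG; have ge0 := number_add_conj_ge0 numG; have le0 := add_conj_le0 ge0.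
split=> // G' [ge0' le0'].
by split; [exact: game_ge_inverse le0 ge0' | exact: game_ge_inverse le0' ge0].
Qed.
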